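(* Let $d_{21}$ be the 3-dimensional complex associative algebra with basis $\{e_1,e_2,e_3\}$ and nonzero products $e_1e_1=e_3$, $e_1e_2=e_3$, $e_2e_1=-e_3$. For every Hermitian inner product $\langle\cdot,\cdot\rangle$ on $d_{21}$ there exist $k>0$, $a>0$ and an automorphism $\phi$ of $d_{21}$ such that $\{a\phi e_1,\phi e_2,\phi e_3\}$ is an orthonormal basis with respect to $k\langle\cdot,\cdot\rangle$.
   Context: An automorphism of an algebra is an invertible linear map $\phi$ with $\phi(xy)=\phi(x)\phi(y)$. All products of basis vectors of $d_{21}$ not listed are zero. *)

(* The complex numbers are modelled as R[i] = complex R
   (mathcomp-real-closed) over an arbitrary R : realType (the real numbers). *)
From mathcomp Require Import all_boot all_algebra.
From mathcomp Require Import reals.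
From mathcomp.real_closed Require Import complex.
Set Implicit Arguments. Unset Strict Implicit. Unset Printing Implicit Defensive.
Import GRing.Theory Num.Theory.
Local Open Scope ring_scope.

Section D21.
Variable R : realType.
Local Notation C := (R[i]).
Local Notation V := ('rV[C]_3).

(* standard basis e_1, e_2, e_3  (indices 0, 1, 2) *)
Definition d21_e (i : 'I_3) : V := delta_mx 0 i.

(* bilinear product of d_21: e1e1 = e3, e1e2 = e3, e2e1 = -e3, others 0 *)
Definition d21_mul (x y : V) : V :=
  (x 0 0 * y 0 0 + x 0 0 * y 0 1 - x 0 1 * y 0 0) *: d21_e 2.

Definition d21_automorphism (phi : V -> V) : Prop :=
  [/\ forall (c : C) (x y : V), phi (c *: x + y) = c *: phi x + phi y,
      bijective phi
    & forall x y : V, phi (d21_mul x y) = d21_mul (phi x) (phi y)].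

Definition hermitian_inner_product (ip : V -> V -> C) : Prop :=
  [/\ forall (c : C) (x y z : V), ip (c *: x + y) z = c * ip x z + ip y z,
      forall x y : V, ip y x = (ip x y)^*
    & forall x : V, x != 0 -> 0 < ip x x].

Definition orthonormal_basis (ip : V -> V -> C) (b : 'I_3 -> V) : Prop :=
  row_free (\matrix_(i < 3) b i) /\
  forall i j : 'I_3, ip (b i) (b j) = (i == j)%:R.

End D21.

From mathcomp Require Import all_boot all_algebra.
From mathcomp Require Import reals.
From mathcomp.real_closed Require Import complex.
From mathcomp Require Import order ring.
(* Gram-Schmidt applied to e3, e2, e1 (in this order) yields an orthogonal basis
   u1, u2, u3 = e3 whose coordinate matrix is upper unitriangular.  For any
   alpha != 0 the linear map e1 |-> alpha u1, e2 |-> alpha u2, e3 |-> alpha^2 u3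
   is an automorphism of d21: the product only depends on the e1- and
   e2-coordinates, the e2-coordinate of u1 cancels in x1 y2 - x2 y1, and the
   remaining terms scale by alpha^2.  Taking alpha^2 = |u2|^2 / |u3|^2 gives
   alpha u2 and alpha^2 u3 the same norm; k normalizes it and a rescales the
   first vector. *)

Set Implicit Arguments. Unset Strict Implicit. Unset Printing Implicit Defensive.
Import Order.TTheory GRing.Theory Num.Theory.
Local Open Scope ring_scope.

Definition orthogonal_family {C : numClosedFieldType} {m n}
    (ip : 'rV[C]_n -> 'rV[C]_n -> C) (u : 'I_m -> 'rV[C]_n) :=
  forall i j, i != j -> ip (u i) (u j) = 0.

Section Sesquilinear.
Variables (C : numClosedFieldType) (n : nat) (ip : 'rV[C]_n -> 'rV[C]_n -> C).
Hypothesis ip_linear : forall c x y z, ip (c *: x + y) z = c * ip x z + ip y z.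
Hypothesis ip_conj : forall x y, ip y x = (ip x y)^*.

Lemma ip0l z : ip 0 z = 0.
Proof.
by apply/(addrI (ip 0 z)); rewrite addr0 -{1}[ip 0 z]mul1r -ip_linear scale1r addr0.
Qed.

Lemma ipDl x y z : ip (x + y) z = ip x z + ip y z.
Proof. by have := ip_linear 1 x y z; rewrite scale1r mul1r. Qed.

Lemma ipZl c x z : ip (c *: x) z = c * ip x z.
Proof. by rewrite -[c *: x]addr0 ip_linear ip0l addr0. Qed.

Lemma ipBl x y z : ip (x - y) z = ip x z - ip y z.
Proof. by rewrite ipDl -scaleN1r ipZl mulN1r. Qed.

Lemma ipZr c x z : ip z (c *: x) = c^* * ip z x.
Proof. by rewrite ip_conj ipZl rmorphM /= -ip_conj. Qed.

Lemma ip_suml m (f : 'I_m -> 'rV[C]_n) z : ip (\sum_i f i) z = \sum_i ip (f i) z.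
Proof. exact: (big_morph (ip^~ z) (fun x y => ipDl x y z) (ip0l z)). Qed.

Lemma ip_sub_proj u v : ip u u != 0 -> ip (v - (ip v u / ip u u) *: u) u = 0.
Proof. by move=> uu_neq0; rewrite ipBl ipZl divfK ?subrr. Qed.

Lemma orthogonal_row_free m (u : 'I_m -> 'rV[C]_n) :
  orthogonal_family ip u -> (forall i, ip (u i) (u i) != 0) ->
  row_free (\matrix_i u i).
Proof.
move=> u_orth u_neq0; rewrite -kermx_eq0 -submx0; apply/row_subP => k.
move: (row k _) (row_sub k (kermx (\matrix_i u i))) => x /sub_kermxP x_ker.
suff -> : x = 0 by rewrite sub0mx.
apply/rowP => j; apply/(mulIf (u_neq0 j)); rewrite mxE mul0r.
have /(congr1 (ip^~ (u j))) := x_ker; rewrite mulmx_sum_row ip_suml ip0l => <-.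
rewrite (bigD1 j) //= big1 => [|i ij]; first by rewrite addr0 rowK ipZl.
by rewrite rowK ipZl u_orth ?mulr0.
Qed.

Lemma orthogonal_familyZ m (t : 'I_m -> C) (u : 'I_m -> 'rV[C]_n) :
  orthogonal_family ip u -> orthogonal_family ip (fun i => t i *: u i).
Proof. by move=> u_orth i j ij; rewrite ipZl ipZr u_orth ?mulr0. Qed.

End Sesquilinear.

Definition upper_unitriangular {R : pzRingType} {n} (u : 'I_n -> 'rV[R]_n) :=
  forall i j : 'I_n, (j <= i)%N -> u i 0 j = (i == j)%:R.

Lemma scaled_unitriangular_unitmx (F : fieldType) n (s : 'I_n -> F)
    (u : 'I_n -> 'rV[F]_n) :
  upper_unitriangular u -> (forall i, s i != 0) -> \matrix_i (s i *: u i) \in unitmx.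
Proof.
move=> u_tri s_neq0; rewrite unitmxE unitfE -det_tr det_trig.
  by apply/prodf_neq0 => i _; rewrite !mxE u_tri // eqxx mulr1.
apply/is_trig_mxP => i j lt_ij; rewrite !mxE u_tri ?(ltnW lt_ij) //.
by rewrite -val_eqE /= gtn_eqF ?mulr0.
Qed.

Lemma ord3_ind (P : 'I_3 -> Prop) : P 0 -> P 1 -> P 2 -> forall i, P i.
Proof.
move=> P0 P1 P2 [[|[|[|//]]] lt_i].
- by rewrite (_ : Ordinal lt_i = 0) //; apply/val_inj.
- by rewrite (_ : Ordinal lt_i = 1) //; apply/val_inj.
- by rewrite (_ : Ordinal lt_i = 2) //; apply/val_inj.
Qed.

Lemma mulmx_row3E (F : pzSemiRingType) (x : 'rV[F]_3) (P : 'M[F]_3) j :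
  (x *m P) 0 j = x 0 0 * P 0 j + x 0 1 * P 1 j + x 0 2 * P 2 j.
Proof.
rewrite mxE !big_ord_recr big_ord0 /= add0r.
by congr (_ + _ + _); congr (x 0 _ * P _ j); apply/val_inj.
Qed.

Section D21.
Variable R : realType.
Local Notation C := R[i].
Local Notation V := 'rV[C]_3.

Definition d21_scaling (al : C) (i : 'I_3) : C := if i == 2 then al ^+ 2 else al.

Lemma d21_automorphism_scaled (al : C) (u : 'I_3 -> V) :
  upper_unitriangular u -> al != 0 ->
  d21_automorphism (mulmx^~ (\matrix_i (d21_scaling al i *: u i))).
Proof.
set P := \matrix_i _ => u_tri al_neq0; split.
- by move=> c x y; rewrite mulmxDl scalemxAl.
- have P_unit : P \in unitmx.
    apply: scaled_unitriangular_unitmx => // i.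
    by rewrite /d21_scaling; case: ifP; rewrite ?expf_neq0.
  by exists (mulmx^~ (invmx P)) => x; [exact: mulmxK | exact: mulmxKV].
have P2 : row 2 P = al ^+ 2 *: d21_e R 2.
  by rewrite rowK; congr (_ *: _); apply/rowP => j; rewrite !mxE u_tri ?leq_ord // eq_sym.
have [P00 P10 P11 P20 P21] :
    [/\ P 0 0 = al, P 1 0 = 0, P 1 1 = al, P 2 0 = 0 & P 2 1 = 0].
  by split; rewrite !mxE u_tri //= /d21_scaling /= ?mulr0 ?mulr1.
move=> x y; rewrite /d21_mul -scalemxAl /d21_e -rowE P2 scalerA.
by congr (_ *: _); rewrite !mulmx_row3E P00 P10 P11 P20 P21; ring.
Qed.

Variable ip : V -> V -> C.
Hypothesis ipH : hermitian_inner_product ip.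

Lemma d21_gram_schmidt :
  exists u : 'I_3 -> V, upper_unitriangular u /\ orthogonal_family ip u.
Proof.
have [ip_lin ip_conj ip_pos] := ipH.
pose proj u v := (ip v u / ip u u) *: u.
pose e := d21_e R.
have e_neq0 i : e i != 0.
  by apply/eqP => /rowP /(_ i) /eqP; rewrite !mxE !eqxx oner_eq0.
have ip_neq0 v : v != 0 -> ip v v != 0 by move/ip_pos/lt0r_neq0.
pose w1 := e 1 - proj (e 2) (e 1).
have w1_e2 : ip w1 (e 2) = 0 by rewrite ip_sub_proj ?ip_neq0.
have w1_neq0 : w1 != 0.
  by apply/eqP => /rowP /(_ 1) /eqP; rewrite !mxE /= mulr0 subr0 oner_eq0.
pose w0 := e 0 - proj w1 (e 0) - proj (e 2) (e 0).
have w0_w1 : ip w0 w1 = 0.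
  rewrite !ipBl // !ipZl // [ip (e 2) w1]ip_conj w1_e2 conjC0 mulr0 subr0.
  by rewrite divfK ?subrr ?ip_neq0.
have w0_e2 : ip w0 (e 2) = 0.
  by rewrite !ipBl // !ipZl // w1_e2 mulr0 subr0 divfK ?subrr ?ip_neq0.
exists (fun i => if i == 0 then w0 else if i == 1 then w1 else e 2); split.
  case=> [[|[|[|?]]] ?] [[|[|[|?]]] ?] //= _;
  by rewrite /w0 /w1 /proj /e /d21_e ?mxE /= ?(mulr0, subr0, oppr0).
case=> [[|[|[|?]]] ?] [[|[|[|?]]] ?] //= _;
  by rewrite ?w0_w1 ?w0_e2 ?w1_e2 // ip_conj ?w0_w1 ?w0_e2 ?w1_e2 conjC0.
Qed.

Lemma orthonormal_basis_scaled (k : C) (t : 'I_3 -> C) (u b : 'I_3 -> V) :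
  orthogonal_family ip u -> (forall i, b i = t i *: u i) ->
  (forall i, k * (`|t i| ^+ 2 * ip (u i) (u i)) = 1) ->
  orthonormal_basis (fun x y => k * ip x y) b.
Proof.
have [ip_lin ip_conj _] := ipH; move=> u_orth bE normE.
have b_orth : orthogonal_family ip b.
  by move=> i j ij; rewrite !bE orthogonal_familyZ.
have b_norm i : k * ip (b i) (b i) = 1 by rewrite bE ipZl // ipZr // mulrA -normCK.
split.
  apply: orthogonal_row_free b_orth _ => // i; apply/eqP => bb0.
  by have /eqP := b_norm i; rewrite bb0 mulr0 eq_sym oner_eq0.
by move=> i j; case: eqVneq => [<-|ij]; rewrite ?b_norm ?b_orth ?mulr0.
Qed.

Lemma d21_scaling_normalizes (N : 'I_3 -> C) (al a : C) :
  (forall i, N i != 0) -> 0 <= al -> 0 <= a ->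
  al ^+ 2 = N 1 / N 2 -> a ^+ 2 = N 1 / N 0 ->
  forall i, N 2 / N 1 ^+ 2 *
    (`|if i == 0 then a * al else d21_scaling al i| ^+ 2 * N i) = 1.
Proof.
move=> N_neq0 al_ge0 a_ge0 al2 a2; apply: ord3_ind; rewrite /d21_scaling /=.
- by rewrite normrM !ger0_norm // exprMn a2 al2; field; rewrite !N_neq0.
- by rewrite ger0_norm // al2; field; rewrite !N_neq0.
- by rewrite ger0_norm ?exprn_ge0 // al2; field; rewrite !N_neq0.
Qed.

End D21.

Theorem lemma5p1 (R : realType) (ip : 'rV[R[i]]_3 -> 'rV[R[i]]_3 -> R[i]) :
  hermitian_inner_product ip ->
  exists (k a : R[i]) (phi : 'rV[R[i]]_3 -> 'rV[R[i]]_3),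
    [/\ 0 < k, 0 < a, d21_automorphism phi &
        orthonormal_basis (fun x y => k * ip x y)
          (fun i : 'I_3 =>
             if i == 0 then a *: phi (d21_e R 0) else phi (d21_e R i))].
Proof.
move=> ipH; have [_ _ ip_pos] := ipH.
have [u [u_tri u_orth]] := d21_gram_schmidt ipH.
pose N i := ip (u i) (u i).
have N_gt0 i : 0 < N i.
  by apply/ip_pos/eqP => /rowP /(_ i); rewrite u_tri // eqxx mxE => /eqP; rewrite oner_eq0.
pose al := sqrtC (N 1 / N 2); pose a := sqrtC (N 1 / N 0).
have al_gt0 : 0 < al by rewrite sqrtC_gt0 divr_gt0.
have a_gt0 : 0 < a by rewrite sqrtC_gt0 divr_gt0.
pose P := \matrix_i (d21_scaling al i *: u i).
exists (N 2 / N 1 ^+ 2), a, (mulmx^~ P); split => //.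
- by rewrite divr_gt0 ?exprn_gt0.
- exact: d21_automorphism_scaled (lt0r_neq0 al_gt0).
pose t i := if i == 0 then a * al else d21_scaling al i.
apply: (orthonormal_basis_scaled ipH (t := t) u_orth) => [i|].
  by rewrite /d21_e -!rowE !rowK /t; case: eqP => [->|] //; rewrite scalerA.
apply: d21_scaling_normalizes; rewrite ?sqrtCK ?ltW // => i.
exact: lt0r_neq0.
Qed.
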